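(* Let $\mathcal H$ be a functional unit for $\mathbb S$ with $(\mathrm{dup},\mathrm{Dup})\in\mathcal H$, let $I\subseteq IF(\mathcal H)$ with $\mathrm{dup}\in I$, and let $x\in\mathcal L_f(IF(\mathcal H))$ be a reflexive interpreter for $\mathcal L_f(I)$ with respect to $\mathcal H$. Then there exist $y\in\mathcal L_f(I)$ and $v\in\{0,1,:\}^*$ such that $x\uparrow\mathcal H(\triangleright\overline{y}:v)$.
   Context: Instruction sequences: Fix a symbol $f$ (the focus). For a set $I$ of method names, $\mathcal L_f(I)$ is the set of all finite sequences $u_1;\ldots;u_k$ ($k\ge1$) of primitive instructions, each of which is one of: $f.m$, $+f.m$, $-f.m$ with $m\in I$ (plain basic, positive test, negative test instruction); $\#l$ or $\backslash\#l$ with $l\in\mathbb N$ (forward / backward jump); $!t$ (positive termination); $!f$ (negative termination). Functional units: for a nonempty set $S$, a method operation on $S$ is a total function $M:S\to\{T,F\}\times S$. A functional unit for $S$ is a finite set $\mathcal H$ of pairs $(m,M)$ ($m$ a method name, $M$ a method operation on $S$) in which each method name occurs at most once; $IF(\mathcal H)$ is the set of method names occurring in $\mathcal H$, and $m_{\mathcal H}$ is the method operation paired with $m\in IF(\mathcal H)$. Execution: for $x=u_1;\ldots;u_k$, a functional unit $\mathcal H$ for $S$ and $s\in S$, the execution of $x$ on $\mathcal H(s)$ is the deterministic run through configurations $(i,t)$ (instruction position, current state) starting at $(1,s)$: if $i\notin\{1,\ldots,k\}$ the run stops without terminating (deadlock); if $u_i$ is $f.m$, $+f.m$ or $-f.m$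 with $m\notin IF(\mathcal H)$ the run stops without terminating; otherwise, with $(b,t')=m_{\mathcal H}(t)$: $u_i=f.m$ leads to $(i+1,t')$; $u_i=+f.m$ leads to $(i+1,t')$ if $b=T$ and to $(i+2,t')$ if $b=F$; $u_i=-f.m$ leads to $(i+2,t')$ if $b=T$ and to $(i+1,t')$ if $b=F$; $u_i=\#l$ leads to $(i+l,t)$; $u_i=\backslash\#l$ leads to $(i-l,t)$; $u_i=!t$ (resp. $!f$) makes the run terminate with value $T$ (resp. $F$) and final state $t$. We say $x$ converges on $\mathcal H(s)$, written $x\downarrow\mathcal H(s)$, if the run reaches $!t$ or $!f$ after finitely many steps; otherwise $x$ diverges on $\mathcal H(s)$, written $x\uparrow\mathcal H(s)$. The reply $\mathrm{rep}(x,\mathcal H(s))\in\{T,F,D\}$ is the termination value if $x\downarrow\mathcal H(s)$ and $D$ (divergent) otherwise; if $x\downarrow\mathcal H(s)$, $\mathrm{fin}(x,\mathcal H(s))$ denotes the final state. Tape states: $\mathbb S=\{v\triangleright w : v,w\in\{0,1,:\}^*\}$, formal pairs of strings over the alphabet $\{0,1,:\}$ (':' is the colon symbol, $\triangleright$ marks the head position); $\triangleright w$ denotes the state with empty left part and right part $w$, and juxtaposition denotes concatenation, so e.g. $\triangleright v:w$ has right part $v$, then a colon, then $w$. For each functional unit $\mathcal H$ for $\mathbb S$ a fixed injective encoding $x\mapsto\overline x$ from $\mathcal L_f(IF(\mathcal H))$ into $\{0,1\}^*$ is given. Duplication: $\mathrm{dup}$ is a method name and $\mathrm{Dup}$ is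 the method operation on $\mathbb S$ given by $\mathrm{Dup}(v\triangleright w)=\mathrm{Dup}(\triangleright vw)$; $\mathrm{Dup}(\triangleright v)=(T,\triangleright v:v)$ for $v\in\{0,1\}^*$; $\mathrm{Dup}(\triangleright v:w)=(T,\triangleright v:v:w)$ for $v\in\{0,1\}^*$, $w\in\{0,1,:\}^*$. Interpreters: let $\mathcal H$ be a functional unit for $\mathbb S$, $I\subseteq IF(\mathcal H)$, $I'\subseteq I$. Then $x\in\mathcal L_f(I)$ is an interpreter for $\mathcal L_f(I')$ with respect to $\mathcal H$ if for all $y\in\mathcal L_f(I')$ and $v\in\{0,1,:\}^*$ with $y\downarrow\mathcal H(\triangleright v)$: $x\downarrow\mathcal H(\triangleright\overline y:v)$, $\mathrm{fin}(x,\mathcal H(\triangleright\overline y:v))=\mathrm{fin}(y,\mathcal H(\triangleright v))$ and $\mathrm{rep}(x,\mathcal H(\triangleright\overline y:v))=\mathrm{rep}(y,\mathcal H(\triangleright v))$. It is a reflexive interpreter if moreover $x\in\mathcal L_f(I')$. (The paper applies this with $x\in\mathcal L_f(IF(\mathcal H))$, i.e. $I=IF(\mathcal H)$.) *)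

From Stdlib Require List.
From mathcomp Require Import all_boot.
Set Implicit Arguments. Unset Strict Implicit. Unset Printing Implicit Defensive.

Inductive sym := S0 | S1 | Col.

(* v |> w  is represented by the pair (v, w) *)
Definition state := (seq sym * seq sym)%type.

Definition hd_state (w : seq sym) : state := ([::], w).

Definition bit (b : bool) : sym := if b then S1 else S0.

Definition mop := state -> bool * state.   (* true = T, false = F *)

Record funit (M : eqType) := FUnit {
  fu_ops : seq (M * mop);
  fu_uniq : uniq (map fst fu_ops) }.

Definition IF (M : eqType) (H : funit M) : M -> Prop :=
  fun m => m \in map fst (fu_ops H).

Fixpoint lookup (M : eqType) (l : seq (M * mop)) (m : M) : option mop :=
  match l with
  | [::] => None
  | (m', F) :: l' => if m' == m then Some F else lookup l' m
  end.

Definition fu_has (M : eqType) (H : funit M) (m : M) (Op : mop) : Prop :=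
  exists Op', List.In (m, Op') (fu_ops H) /\ forall s, Op' s = Op s.

Inductive instr (M : Type) :=
  | Basic of M
  | PTest of M
  | NTest of M
  | FJump of nat
  | BJump of nat
  | TermT
  | TermF.
Arguments TermT {M}. Arguments TermF {M}.

Definition instr_in (M : Type) (I : M -> Prop) (u : instr M) : Prop :=
  match u with
  | Basic m | PTest m | NTest m => I m
  | _ => True
  end.

Definition in_L (M : Type) (I : M -> Prop) (x : seq (instr M)) : Prop :=
  0 < size x /\ forall u, List.In u x -> instr_in I u.

(* exec x H n i s: run x from configuration (i, s) (positions are 1-based)
   for at most n steps; Some (b, t) iff the run terminates within n steps with
   value b (true = T, false = F) and final state t.  None covers both
   "not yet terminated" and "stopped without terminating". *)
Fixpoint exec (M : eqType) (x : seq (instr M)) (H : funit M)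
    (n i : nat) (s : state) : option (bool * state) :=
  match n with
  | 0 => None
  | n'.+1 =>
    if (0 < i) && (i <= size x) then
      match nth TermT x i.-1 with
      | Basic m =>
          match lookup (fu_ops H) m with
          | None => None
          | Some Op => exec x H n' i.+1 (Op s).2
          end
      | PTest m =>
          match lookup (fu_ops H) m with
          | None => None
          | Some Op => exec x H n' (if (Op s).1 then i.+1 else i.+2) (Op s).2
          end
      | NTest m =>
          match lookup (fu_ops H) m with
          | None => None
          | Some Op => exec x H n' (if (Op s).1 then i.+2 else i.+1) (Op s).2
          end
      | FJump l => exec x H n' (i + l) s
      | BJump l => exec x H n' (i - l) s  (* i - l <= 0 means position outside 1..k *)
      | TermT => Some (true, s)
      | TermF => Some (false, s)
      end
    else None
  end.

Definition terminates_with (M : eqType) (x : seq (instr M)) (H : funit M)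
    (s : state) (b : bool) (t : state) : Prop :=
  exists n, exec x H n 1 s = Some (b, t).

Definition converges (M : eqType) (x : seq (instr M)) (H : funit M) (s : state) : Prop :=
  exists b t, terminates_with x H s b t.

Definition diverges (M : eqType) (x : seq (instr M)) (H : funit M) (s : state) : Prop :=
  ~ converges x H s.

Fixpoint split_col (u : seq sym) : seq sym * option (seq sym) :=
  match u with
  | [::] => ([::], None)
  | Col :: w => ([::], Some w)
  | a :: w => let: (v, o) := split_col w in (a :: v, o)
  end.

Definition Dup : mop := fun s =>
  let: (l, r) := s in
  match split_col (l ++ r) with
  | (v, None) => (true, hd_state (v ++ Col :: v))
  | (v, Some w) => (true, hd_state (v ++ Col :: v ++ Col :: w))
  end.

Definition encoding_injective (M : eqType) (H : funit M)
    (enc : seq (instr M) -> seq bool) : Prop :=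
  forall y1 y2, in_L (IF H) y1 -> in_L (IF H) y2 -> enc y1 = enc y2 -> y1 = y2.

Definition code_state (M : Type) (enc : seq (instr M) -> seq bool)
    (y : seq (instr M)) (v : seq sym) : state :=
  hd_state (map bit (enc y) ++ Col :: v).

(* x in L_f(I) is an interpreter for L_f(I') w.r.t. H (I' subset I subset IF(H)):
   whenever y converges on H(|> v), x converges on H(|> ybar:v), and the
   replies and final states agree (the run being deterministic, this is the
   statement that x terminates with the same value and final state). *)
Definition interpreter (M : eqType) (H : funit M) (enc : seq (instr M) -> seq bool)
    (I I' : M -> Prop) (x : seq (instr M)) : Prop :=
  in_L I x /\
  forall y v, in_L I' y -> converges y H (hd_state v) ->
    converges x H (code_state enc y v) /\
    forall b t, terminates_with y H (hd_state v) b t ->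
                terminates_with x H (code_state enc y v) b t.

Definition reflexive_interpreter (M : eqType) (H : funit M)
    (enc : seq (instr M) -> seq bool) (I I' : M -> Prop) (x : seq (instr M)) : Prop :=
  interpreter H enc I I' x /\ in_L I' x.

(** The diagonal argument of the halting problem. Given a reflexive
    interpreter x, let y run [dup] and then behave like x with the
    termination values [!t] and [!f] exchanged. Started on [|> ybar], y
    duplicates its input and so replies the negation of what x replies on
    [|> ybar:ybar]. If x converged there, y would converge on [|> ybar], so
    the interpreter x would have to give y's reply on [|> ybar:ybar] as well:
    x would reply both b and ~~ b on the same input. *)

From mathcomp Require Import all_boot.
Set Implicit Arguments. Unset Strict Implicit. Unset Printing Implicit Defensive.

Section Execution.

Variables (M : eqType) (x : seq (instr M)) (H : funit M).

Lemma exec_succ n i s r :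
  exec x H n i s = Some r -> exec x H n.+1 i s = Some r.
Proof.
elim: n i s => [//|n IHn] i s /=.
case: ((0 < i) && (i <= size x)) => //.
case: (nth TermT x i.-1) => // [m|m|m|l|l]; try case: (lookup _ m) => // Op;
  exact: IHn.
Qed.

Lemma exec_leq n n' i s r :
  n <= n' -> exec x H n i s = Some r -> exec x H n' i s = Some r.
Proof.
move=> le_nn' ex; rewrite -(subnKC le_nn').
by elim: (n' - n) => [|k IHk]; rewrite ?addn0 ?addnS //; apply: exec_succ.
Qed.

Lemma terminates_with_functional s b b' t t' :
  terminates_with x H s b t -> terminates_with x H s b' t' -> (b, t) = (b', t').
Proof.
move=> [n ex] [n' ex'].
have [le_nn' | /ltnW le_n'n] := leqP n n'.
- by move: ex'; rewrite (exec_leq le_nn' ex) => -[-> ->].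
- by move: ex; rewrite (exec_leq le_n'n ex') => -[-> ->].
Qed.

End Execution.

Lemma In_map_fst (A : eqType) (B : Type) (l : seq (A * B)) a b :
  List.In (a, b) l -> a \in map fst l.
Proof.
elim: l => [//|[a' b'] l IHl] /= [[-> _]|ab_l]; rewrite in_cons ?eqxx //.
by rewrite IHl ?orbT.
Qed.

Lemma lookup_In (M : eqType) (l : seq (M * mop)) m Op :
  uniq (map fst l) -> List.In (m, Op) l -> lookup l m = Some Op.
Proof.
elim: l => [//|[m' Op'] l IHl] /= /andP [m'_notin uniq_l] [[-> ->]|mOp_l].
  by rewrite eqxx.
case: eqP => [eq_m'm|_]; last exact: IHl.
by move: m'_notin; rewrite eq_m'm (In_map_fst mOp_l).
Qed.

Lemma fu_has_lookup (M : eqType) (H : funit M) m Op :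
  fu_has H m Op -> exists2 Op', lookup (fu_ops H) m = Some Op' & Op' =1 Op.
Proof.
by move=> [Op' [mOp' eq_Op']]; exists Op'; first exact: lookup_In (fu_uniq H) _.
Qed.

Definition swap_reply {M : Type} (u : instr M) : instr M :=
  match u with TermT => TermF | TermF => TermT | v => v end.

(* Position i of x is position i.+1 of [u :: map swap_reply x]; a backward
   jump leaving x cannot occur in a terminating run. *)
Lemma exec_cons_swap_reply (M : eqType) (x : seq (instr M)) H (u : instr M) n i s b t :
  0 < i -> exec x H n i s = Some (b, t) ->
  exec (u :: map swap_reply x) H n i.+1 s = Some (~~ b, t).
Proof.
elim: n i s => [//|n IHn] [//|i] s _ /=.
rewrite size_map ltnS; case: ltnP => //= lt_i_x.
rewrite (nth_map TermT) //.
case: (nth TermT x i) => /= [m|m|m|l|l||].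
- by case: (lookup _ m) => // Op; apply: IHn.
- by case: (lookup _ m) => // Op; case: (Op s).1; apply: IHn.
- by case: (lookup _ m) => // Op; case: (Op s).1; apply: IHn.
- by move=> ex; apply: IHn ex; rewrite addSn.
- move=> ex.
  have target_gt0 : 0 < i.+1 - l by case: n {IHn} ex => [|n] //=; case: (i.+1 - l).
  have le_l_Si : l <= i.+1 by apply: ltnW; rewrite -subn_gt0.
  by rewrite (subSn le_l_Si); apply: IHn.
- by case=> <- <-.
- by case=> <- <-.
Qed.

Lemma split_col_bits (w : seq bool) : split_col (map bit w) = (map bit w, None).
Proof. by elim: w => [//|[] w IHw] /=; rewrite IHw. Qed.

Lemma Dup_bits (w : seq bool) :
  Dup (hd_state (map bit w)) = (true, hd_state (map bit w ++ Col :: map bit w)).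
Proof. by rewrite /Dup /= split_col_bits. Qed.

Definition diagonal (M : Type) (dup : M) (x : seq (instr M)) : seq (instr M) :=
  Basic dup :: map swap_reply x.

Lemma in_L_diagonal (M : Type) (I : M -> Prop) dup x :
  I dup -> in_L I x -> in_L I (diagonal dup x).
Proof.
move=> Idup [_ xI]; split=> // u /= [<- //|/List.in_map_iff [u' [<- u'_x]]].
by case: u' u'_x => //= m /xI.
Qed.

Lemma terminates_with_diagonal (M : eqType) (H : funit M) dup x w b t :
  fu_has H dup Dup ->
  terminates_with x H (hd_state (map bit w ++ Col :: map bit w)) b t ->
  terminates_with (diagonal dup x) H (hd_state (map bit w)) (~~ b) t.
Proof.
move=> /fu_has_lookup [Op lookup_dup eq_Op] [n ex].
exists n.+1 => /=; rewrite lookup_dup eq_Op Dup_bits.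
exact: exec_cons_swap_reply ex.
Qed.

Theorem theorem1 (M : eqType) (dup : M) (H : funit M)
    (enc : seq (instr M) -> seq bool) (I : M -> Prop) (x : seq (instr M)) :
  encoding_injective H enc ->
  fu_has H dup Dup ->
  (forall m, I m -> IF H m) ->
  I dup ->
  in_L (IF H) x ->
  reflexive_interpreter H enc (IF H) I x ->
  exists y v, in_L I y /\ diverges x H (code_state enc y v).
Proof.
move=> _ H_dup _ I_dup _ [[_ x_interprets] x_in_LI].
set y := diagonal dup x; set w := map bit (enc y).
have y_in_LI : in_L I y by exact: in_L_diagonal.
exists y, w; split=> // -[b [t x_b]].
have y_nb := terminates_with_diagonal H_dup x_b.
have [_ x_simulates_y] := x_interprets y w y_in_LI (ex_intro _ _ (ex_intro _ _ y_nb)).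
have := terminates_with_functional x_b (x_simulates_y _ _ y_nb).
by case: b {x_b y_nb}.
Qed.
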